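(* Let $\ell_1,\dots,\ell_T$ be labels, $v_1,v_2>0$, $1\le i\le j\le T$, and suppose the optimal solution of subproblem $(i,j)$ is constant (hence equal to $r_{i,j}$). Let $r_{i,j}\le\alpha\le 1$ and consider the augmented subproblem: minimize $J_{i,j}(p_i,\dots,p_j)$ subject to $\alpha\le p_i\le p_{i+1}\le\cdots\le p_j\le 1$. Then for every RBPSR $C_\rho$, the constant solution $p_i=\cdots=p_j=\alpha$ minimizes the augmented subproblem.
   Context: A regular binary proper scoring rule (RBPSR) is a function $C_\rho:\{\theta_1,\theta_2\}\times[0,1]\to[0,\infty]$ given by $C_\rho(\theta_1,q)=\int_q^1\frac{\rho(\eta)}{\eta}\,d\eta$ and $C_\rho(\theta_2,q)=\int_0^q\frac{\rho(\eta)}{1-\eta}\,d\eta$, where $\rho$ is a probability distribution on $[0,1]$ (possibly containing Dirac point masses), and these integrals are finite except that $C_\rho(\theta_1,0)$ and $C_\rho(\theta_2,1)$ may equal $\infty$. Given labels $\ell_1,\dots,\ell_T\in\{\theta_1,\theta_2\}$ and weights $v_1,v_2>0$, write $w(\theta_1)=v_1$, $w(\theta_2)=v_2$. For $1\le i\le j\le T$, a solution of subproblem $(i,j)$ is any $p_{i,j}=(p_i,\dots,p_j)\in[0,1]^{j-i+1}$, feasible if $p_i\le\cdots\le p_j$, with objective $J_{i,j}(p_{i,j})=\sum_{t=i}^j w(\ell_t)C_\rho(\ell_t,p_t)$. The optimal solution of subproblem $(i,j)$ is a feasible solution minimizing $J_{i,j}$ among feasible solutions simultaneously for every RBPSR $C_\rho$;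 it is constant if $p_i=\cdots=p_j$. For $i\le j$, $r_{i,j}=\frac{v_1m_{i,j}}{v_1m_{i,j}+v_2n_{i,j}}$, where $m_{i,j},n_{i,j}$ are the numbers of $\theta_1$- and $\theta_2$-labels among $\ell_i,\dots,\ell_j$. *)

From Stdlib Require Import Reals Lra Lia List ClassicalEpsilon.
Open Scope R_scope.

(** * Extended non-negative reals [0, +oo] (only the operations we need) *)
Inductive ereal : Type := Fin (r : R) | PInf.

Definition ele (x y : ereal) : Prop :=
  match x, y with
  | _, PInf => True
  | PInf, Fin _ => False
  | Fin a, Fin b => a <= b
  end.

Definition eplus (x y : ereal) : ereal :=
  match x, y with
  | Fin a, Fin b => Fin (a + b)
  | _, _ => PInf
  end.

(* scaling by a weight c; only ever used with c > 0, so c * oo = oo *)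
Definition escale (c : R) (x : ereal) : ereal :=
  match x with
  | Fin a => Fin (c * a)
  | PInf => PInf
  end.

(* supremum in [-oo,+oo] of a set of reals (sets used here are nonempty) *)
Definition esup (S : R -> Prop) : ereal :=
  match excluded_middle_informative (bound S /\ exists x, S x) with
  | left H => Fin (proj1_sig (completeness S (proj1 H) (proj2 H)))
  | right _ => PInf
  end.

(** * Probability distributions on [0,1], given by their (right-continuous)
      cumulative distribution function F.  F(x) = rho([0,x]); rho((a,b]) = F b - F a.
      Every probability distribution on [0,1] (with or without atoms) arises
      this way, and conversely. *)
Definition is_cdf01 (F : R -> R) : Prop :=
  (forall x y, x <= y -> F x <= F y) /\
  (forall x, x < 0 -> F x = 0) /\
  (forall x, 1 <= x -> F x = 1) /\
  (forall x eps, 0 < eps -> exists d, 0 < d /\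
       forall y, x <= y < x + d -> F y - F x < eps).

(** * Lebesgue–Stieltjes integral over (a,b] of a non-negative, [0,+oo]-valued
      integrand g w.r.t. rho = dF, as the supremum of integrals of
      non-negative step functions below g:
      lower_sum F g a b s  <->  s = sum_k c_k (F x_k - F x_{k-1}) for some
      partition a = x_0 < x_1 < ... < x_n = b and constants 0 <= c_k <= g on
      (x_{k-1}, x_k]. *)
Inductive lower_sum (F : R -> R) (g : R -> ereal) : R -> R -> R -> Prop :=
| ls_nil : forall a, lower_sum F g a a 0
| ls_cons : forall a x b c s,
    a < x -> 0 <= c ->
    (forall y, a < y <= x -> ele (Fin c) (g y)) ->
    lower_sum F g x b s ->
    lower_sum F g a b (c * (F x - F a) + s).

Definition LSint (F : R -> R) (g : R -> ereal) (a b : R) : ereal :=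
  esup (lower_sum F g a b).

(* the integrands  1/eta  and  1/(1-eta)  (value +oo where the denominator is 0) *)
Definition inv_eta (e : R) : ereal := if Rlt_dec 0 e then Fin (/ e) else PInf.
Definition inv_one_minus_eta (e : R) : ereal :=
  if Rlt_dec e 1 then Fin (/ (1 - e)) else PInf.

Inductive label : Type := theta1 | theta2.

(* C_rho(theta1,q) = int_q^1 rho(eta)/eta d eta ;
   C_rho(theta2,q) = int_0^q rho(eta)/(1-eta) d eta  *)
Definition C_rho (F : R -> R) (l : label) (q : R) : ereal :=
  match l with
  | theta1 => LSint F inv_eta q 1
  | theta2 => LSint F inv_one_minus_eta 0 q
  end.

Definition weight (v1 v2 : R) (l : label) : R :=
  match l with theta1 => v1 | theta2 => v2 end.

(** * Subproblem (i,j): labels are  lab : nat -> label  (only lab 1..lab T used),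
      solutions are  p : nat -> R  (only p i .. p j used). *)
Fixpoint esum (f : nat -> ereal) (l : list nat) : ereal :=
  match l with
  | nil => Fin 0
  | t :: l' => eplus (f t) (esum f l')
  end.

Definition idx (i j : nat) : list nat := List.seq i (S j - i).

Definition J (F : R -> R) (lab : nat -> label) (v1 v2 : R) (i j : nat)
  (p : nat -> R) : ereal :=
  esum (fun t => escale (weight v1 v2 (lab t)) (C_rho F (lab t) (p t))) (idx i j).

Definition feasible (i j : nat) (p : nat -> R) : Prop :=
  (forall t, (i <= t <= j)%nat -> 0 <= p t <= 1) /\
  (forall t, (i <= t < j)%nat -> p t <= p (S t)).

Definition is_constant (i j : nat) (p : nat -> R) : Prop :=
  forall t, (i <= t <= j)%nat -> p t = p i.

(* optimal solution: feasible, and minimizes J among feasible solutions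
   simultaneously for every RBPSR *)
Definition optimal (lab : nat -> label) (v1 v2 : R) (i j : nat) (p : nat -> R) : Prop :=
  feasible i j p /\
  forall F, is_cdf01 F -> forall q, feasible i j q -> ele (J F lab v1 v2 i j p) (J F lab v1 v2 i j q).

Definition count_label (lab : nat -> label) (x : label) (i j : nat) : nat :=
  List.length (List.filter (fun t => match lab t, x with
                                    | theta1, theta1 | theta2, theta2 => true
                                    | _, _ => false end) (idx i j)).

Definition r_ij (lab : nat -> label) (v1 v2 : R) (i j : nat) : R :=
  let m := INR (count_label lab theta1 i j) in
  let n := INR (count_label lab theta2 i j) in
  v1 * m / (v1 * m + v2 * n).

From Stdlib Require Import Reals.
From Stdlib Require Import Lra Lia List ClassicalEpsilon.
Open Scope R_scope.

(** 1. Optimality of a constant solution forces every suffix (k,j) to have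
       ratio r_kj <= r_ij.  Test optimality against the point mass rho = delta_c
       (c slightly above r_ij) and the step solution 0 on [i,k), 1 on [k,j]:
       the constant optimum costs at least W1(i,j)/c while the step solution
       costs at most W1(i,k-1)/c + W2(k,j)/(1-c), where W1, W2 are the total
       theta1- and theta2-weights; hence r_kj <= c.
    2. Raising the predictions of a block with ratio <= alpha from a constant
       b' >= alpha to a constant b >= b' never increases the cost: the
       theta1-labels save W1 * int_(b',b] rho/eta, which dominates the extra
       W2 * int_(b',b] rho/(1-eta) paid by the theta2-labels, because
       W1 (1-eta) <= W2 eta for eta >= alpha.
    3. Starting from the constant alpha, raise the suffixes (i..j), (i+1..j),
       ... successively to q_i, q_(i+1), ...; by 1 and 2 each step does not
       increase J, and the last profile is q itself. *)

Lemma ele_refl x : ele x x.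
Proof. destruct x; simpl; auto; lra. Qed.

Lemma ele_PInf x : ele x PInf.
Proof. destruct x; simpl; auto. Qed.

Lemma ele_trans x y z : ele x y -> ele y z -> ele x z.
Proof. destruct x, y, z; simpl; intros; auto; try lra; contradiction. Qed.

Lemma eplus_mono x x' y y' : ele x x' -> ele y y' -> ele (eplus x y) (eplus x' y').
Proof. destruct x, x', y, y'; simpl; intros; auto; try lra; contradiction. Qed.

Lemma eplus_comm x y : eplus x y = eplus y x.
Proof. destruct x, y; simpl; auto; f_equal; ring. Qed.

Lemma eplus_assoc x y z : eplus x (eplus y z) = eplus (eplus x y) z.
Proof. destruct x, y, z; simpl; auto; f_equal; ring. Qed.

Lemma eplus_0_l x : eplus (Fin 0) x = x.
Proof. destruct x; simpl; auto; f_equal; ring. Qed.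

Lemma ele_eplus_nonneg_l x y : ele (Fin 0) x -> ele y (eplus x y).
Proof. destruct x, y; simpl; intros; auto; lra. Qed.

Lemma escale_mono c x y : 0 <= c -> ele x y -> ele (escale c x) (escale c y).
Proof. destruct x, y; simpl; intros; auto. apply Rmult_le_compat_l; auto. Qed.

Lemma escale_escale a b x : escale a (escale b x) = escale (a * b) x.
Proof. destruct x; simpl; auto; f_equal; ring. Qed.

Lemma ele_transfer w1 w2 a a' b b' x y : 0 <= w1 -> 0 <= w2 ->
  ele a' (eplus x a) -> ele (eplus y b') b -> ele (escale w1 x) (escale w2 y) ->
  ele (eplus (escale w1 a') (escale w2 b')) (eplus (escale w1 a) (escale w2 b)).
Proof.
  intros Hw1 Hw2; destruct a, a', b, b', x, y; simpl; intros; auto; try contradiction; nra.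
Qed.

(* n-fold sum x + ... + x; in particular nmul 0 x = 0 even for x = +oo. *)
Fixpoint nmul (n : nat) (x : ereal) : ereal :=
  match n with O => Fin 0 | S n' => eplus x (nmul n' x) end.

Lemma nmul_mono n x y : ele x y -> ele (nmul n x) (nmul n y).
Proof. intros H; induction n; simpl nmul; [simpl; lra | apply eplus_mono; auto]. Qed.

Lemma nmul_Fin n a : nmul n (Fin a) = Fin (a * INR n).
Proof.
  induction n as [|n IH]; simpl nmul; [f_equal; simpl; ring|].
  rewrite IH, S_INR; simpl; f_equal; ring.
Qed.

Lemma nmul_escale n v x : (0 < n)%nat -> nmul n (escale v x) = escale (v * INR n) x.
Proof.
  intros Hn. destruct x as [a|]; simpl escale.
  - rewrite nmul_Fin. f_equal; ring.
  - destruct n; [lia | reflexivity].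
Qed.

Lemma nmul_escale_lb n v x X : 0 <= v -> ele (Fin x) X ->
  ele (Fin (v * x * INR n)) (nmul n (escale v X)).
Proof.
  intros Hv H. rewrite <- nmul_Fin. apply nmul_mono. exact (escale_mono v (Fin x) X Hv H).
Qed.

Lemma nmul_escale_ub n v x X : 0 <= v -> ele X (Fin x) ->
  ele (nmul n (escale v X)) (Fin (v * x * INR n)).
Proof.
  intros Hv H. rewrite <- nmul_Fin. apply nmul_mono. exact (escale_mono v X (Fin x) Hv H).
Qed.

Lemma esum_app f L1 L2 : esum f (L1 ++ L2) = eplus (esum f L1) (esum f L2).
Proof.
  induction L1 as [|t L1 IH]; simpl; [symmetry; apply eplus_0_l | now rewrite IH, eplus_assoc].
Qed.

Lemma esum_ext f g L : (forall t, In t L -> f t = g t) -> esum f L = esum g L.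
Proof.
  induction L as [|t L IH]; simpl; intros H; auto. rewrite H, IH; auto.
Qed.

Definition has_label (lab : nat -> label) (x : label) (t : nat) : bool :=
  match lab t, x with
  | theta1, theta1 | theta2, theta2 => true
  | _, _ => false
  end.

Definition cnt (lab : nat -> label) (x : label) (L : list nat) : nat :=
  length (filter (has_label lab x) L).

Definition wcount (lab : nat -> label) (v1 v2 : R) (x : label) (L : list nat) : R :=
  weight v1 v2 x * INR (cnt lab x L).

Lemma r_ij_wcount lab v1 v2 i j : r_ij lab v1 v2 i j =
  wcount lab v1 v2 theta1 (idx i j) /
  (wcount lab v1 v2 theta1 (idx i j) + wcount lab v1 v2 theta2 (idx i j)).
Proof. reflexivity. Qed.

Lemma wcount_app lab v1 v2 x L1 L2 :
  wcount lab v1 v2 x (L1 ++ L2) = wcount lab v1 v2 x L1 + wcount lab v1 v2 x L2.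
Proof. unfold wcount, cnt. rewrite filter_app, length_app, plus_INR. ring. Qed.

Lemma wcount_nonneg lab v1 v2 x L : 0 < v1 -> 0 < v2 -> 0 <= wcount lab v1 v2 x L.
Proof.
  intros. unfold wcount. apply Rmult_le_pos; [destruct x; simpl; lra | apply pos_INR].
Qed.

Lemma cnt_total lab L : (cnt lab theta1 L + cnt lab theta2 L)%nat = length L.
Proof.
  induction L as [|t L IH]; auto. unfold cnt, has_label in *; simpl.
  destruct (lab t); simpl; lia.
Qed.

Lemma wcount_total_pos lab v1 v2 i j : 0 < v1 -> 0 < v2 -> (i <= j)%nat ->
  0 < wcount lab v1 v2 theta1 (idx i j) + wcount lab v1 v2 theta2 (idx i j).
Proof.
  intros Hv1 Hv2 Hij. unfold wcount; simpl weight.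
  assert (Hlen : 1 <= INR (cnt lab theta1 (idx i j)) + INR (cnt lab theta2 (idx i j))).
  { rewrite <- plus_INR, cnt_total. unfold idx. rewrite length_seq.
    apply (le_INR 1). lia. }
  pose proof (pos_INR (cnt lab theta1 (idx i j))).
  pose proof (pos_INR (cnt lab theta2 (idx i j))).
  destruct (Rle_lt_dec (INR (cnt lab theta1 (idx i j))) 0); nra.
Qed.

Lemma r_ij_le_iff lab v1 v2 i j x : 0 < v1 -> 0 < v2 -> (i <= j)%nat ->
  (r_ij lab v1 v2 i j <= x <->
   wcount lab v1 v2 theta1 (idx i j) <=
   x * (wcount lab v1 v2 theta1 (idx i j) + wcount lab v1 v2 theta2 (idx i j))).
Proof.
  intros Hv1 Hv2 Hij. pose proof (wcount_total_pos lab v1 v2 i j Hv1 Hv2 Hij) as HD.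
  rewrite r_ij_wcount.
  set (W1 := wcount lab v1 v2 theta1 (idx i j)) in *.
  set (W := W1 + wcount lab v1 v2 theta2 (idx i j)) in *.
  assert (E : W1 / W * W = W1) by (field; lra).
  split; intros H.
  - rewrite <- E. now apply Rmult_le_compat_r; [lra|].
  - apply (Rmult_le_reg_r W); [lra|]. now rewrite E.
Qed.

Lemma r_ij_bounds lab v1 v2 i j : 0 < v1 -> 0 < v2 -> (i <= j)%nat ->
  0 <= r_ij lab v1 v2 i j <= 1.
Proof.
  intros Hv1 Hv2 Hij. pose proof (wcount_total_pos lab v1 v2 i j Hv1 Hv2 Hij).
  pose proof (wcount_nonneg lab v1 v2 theta1 (idx i j) Hv1 Hv2).
  pose proof (wcount_nonneg lab v1 v2 theta2 (idx i j) Hv1 Hv2).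
  split.
  - rewrite r_ij_wcount. apply Rle_mult_inv_pos; lra.
  - apply r_ij_le_iff; auto. lra.
Qed.

Definition cost (F : R -> R) (lab : nat -> label) (v1 v2 : R) (L : list nat)
  (p : nat -> R) : ereal :=
  esum (fun t => escale (weight v1 v2 (lab t)) (C_rho F (lab t) (p t))) L.

Lemma J_cost F lab v1 v2 i j p : J F lab v1 v2 i j p = cost F lab v1 v2 (idx i j) p.
Proof. reflexivity. Qed.

Lemma cost_app F lab v1 v2 L1 L2 p :
  cost F lab v1 v2 (L1 ++ L2) p = eplus (cost F lab v1 v2 L1 p) (cost F lab v1 v2 L2 p).
Proof. apply esum_app. Qed.

Lemma cost_ext F lab v1 v2 L p q : (forall t, In t L -> p t = q t) ->
  cost F lab v1 v2 L p = cost F lab v1 v2 L q.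
Proof. intros H. apply esum_ext. intros t Ht. now rewrite H. Qed.

Lemma cost_const F lab v1 v2 L b :
  cost F lab v1 v2 L (fun _ => b) =
  eplus (nmul (cnt lab theta1 L) (escale v1 (C_rho F theta1 b)))
        (nmul (cnt lab theta2 L) (escale v2 (C_rho F theta2 b))).
Proof.
  induction L as [|t L IH]; [unfold cost; simpl; f_equal; ring|].
  unfold cost, cnt, has_label in *; simpl. rewrite IH.
  destruct (lab t); simpl.
  - apply eplus_assoc.
  - rewrite !eplus_assoc. f_equal. apply eplus_comm.
Qed.

Lemma idx_split i j k : (i <= k <= S j)%nat -> idx i j = seq i (k - i) ++ idx k j.
Proof.
  intros H. unfold idx. replace (S j - i)%nat with ((k - i) + (S j - k))%nat by lia.
  rewrite seq_app. repeat f_equal. lia.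
Qed.

Lemma in_idx t i j : In t (idx i j) -> (i <= t <= j)%nat.
Proof. unfold idx; rewrite in_seq; lia. Qed.

Lemma in_seq_prefix t i k : In t (seq i (k - i)) -> (i <= t < k)%nat.
Proof. rewrite in_seq; lia. Qed.

Lemma esup_ub S s : S s -> ele (Fin s) (esup S).
Proof.
  intros Hs. unfold esup. destruct (excluded_middle_informative _) as [H|H]; simpl; auto.
  destruct (completeness S (proj1 H) (proj2 H)) as [m [Hm Hm2]]; simpl. now apply Hm.
Qed.

Lemma esup_le S M : (exists s, S s) -> (forall s, S s -> s <= M) -> ele (esup S) (Fin M).
Proof.
  intros Hne Hb. unfold esup. destruct (excluded_middle_informative _) as [H|H].
  - destruct (completeness S (proj1 H) (proj2 H)) as [m [Hm1 Hm]]; simpl. apply Hm. exact Hb.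
  - exfalso; apply H; split; auto. now exists M.
Qed.

Lemma esup_fin_le S x M : esup S = Fin x -> (forall s, S s -> s <= M) -> x <= M.
Proof.
  unfold esup. destruct (excluded_middle_informative _) as [H|H]; [|discriminate].
  destruct (completeness S (proj1 H) (proj2 H)) as [m [Hm1 Hm]]; simpl.
  intros E; injection E; intros <- HM. now apply Hm.
Qed.

Lemma esup_fin_ub S x s : esup S = Fin x -> S s -> s <= x.
Proof. intros E Hs. pose proof (esup_ub S s Hs) as H. now rewrite E in H. Qed.

Definition nonneg (g : R -> ereal) : Prop := forall y, ele (Fin 0) (g y).

Lemma inv_eta_nonneg : nonneg inv_eta.
Proof.
  intros y; unfold inv_eta; destruct (Rlt_dec 0 y); simpl; auto.
  apply Rlt_le, Rinv_0_lt_compat; lra.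
Qed.

Lemma inv_one_minus_eta_nonneg : nonneg inv_one_minus_eta.
Proof.
  intros y; unfold inv_one_minus_eta; destruct (Rlt_dec y 1); simpl; auto.
  apply Rlt_le, Rinv_0_lt_compat; lra.
Qed.

Lemma inv_eta_pos y : 0 < y -> inv_eta y = Fin (/ y).
Proof. unfold inv_eta; destruct (Rlt_dec 0 y); [reflexivity | lra]. Qed.

Lemma inv_one_minus_eta_lt y : y < 1 -> inv_one_minus_eta y = Fin (/ (1 - y)).
Proof. unfold inv_one_minus_eta; destruct (Rlt_dec y 1); [reflexivity | lra]. Qed.

Section LowerSums.

Variable F : R -> R.

Lemma lower_sum_le g a b s : lower_sum F g a b s -> a <= b.
Proof. induction 1; lra. Qed.

Lemma lower_sum_zero g a b : nonneg g -> a <= b -> lower_sum F g a b 0.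
Proof.
  intros Hg Hab. destruct (Req_dec a b) as [<-|Hne]; [constructor|].
  replace 0 with (0 * (F b - F a) + 0) by ring.
  constructor; [lra | lra | intros y _; apply Hg | constructor].
Qed.

Lemma lower_sum_concat g a b c s1 s2 :
  lower_sum F g a b s1 -> lower_sum F g b c s2 -> lower_sum F g a c (s1 + s2).
Proof.
  intros H; revert s2; induction H as [a | a x b k s Hax Hk Hg Hr IH]; intros s2 H2.
  - now replace (0 + s2) with s2 by ring.
  - replace (k * (F x - F a) + s + s2) with (k * (F x - F a) + (s + s2)) by ring.
    constructor; auto.
Qed.

Lemma lower_sum_split g a c s : lower_sum F g a c s -> forall b, a <= b <= c ->
  exists s1 s2, lower_sum F g a b s1 /\ lower_sum F g b c s2 /\ s = s1 + s2.
Proof.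
  induction 1 as [a | a x c k s Hax Hk Hg Hr IH]; intros b Hb.
  - replace b with a by lra. exists 0, 0; repeat split; try constructor; ring.
  - pose proof (lower_sum_le _ _ _ _ Hr) as Hxc.
    destruct (Rle_lt_dec x b) as [Hxb|Hbx].
    + destruct (IH b ltac:(lra)) as [s1 [s2 [H1 [H2 ->]]]].
      exists (k * (F x - F a) + s1), s2; repeat split; auto; [constructor; auto | ring].
    + destruct (Req_dec a b) as [<-|Hab].
      * exists 0, (k * (F x - F a) + s).
        repeat split; [constructor | constructor; auto | ring].
      * exists (k * (F b - F a) + 0), (k * (F x - F b) + s); repeat split; [| |ring].
        -- constructor; [lra | auto | intros y Hy; apply Hg; lra | constructor].
        -- constructor; [lra | auto | intros y Hy; apply Hg; lra | auto].
Qed.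

Lemma lower_sum_scale g h a b s lam : 0 <= lam ->
  (forall y, a < y <= b -> ele (escale lam (g y)) (h y)) ->
  lower_sum F g a b s -> lower_sum F h a b (lam * s).
Proof.
  intros Hl Hh H. induction H as [a | a x b k s Hax Hk Hg Hr IH].
  - replace (lam * 0) with 0 by ring; constructor.
  - pose proof (lower_sum_le _ _ _ _ Hr) as Hxb.
    replace (lam * (k * (F x - F a) + s)) with ((lam * k) * (F x - F a) + lam * s) by ring.
    constructor; auto.
    + now apply Rmult_le_pos.
    + intros y Hy. apply ele_trans with (escale lam (g y)); [|apply Hh; lra].
      exact (escale_mono lam (Fin k) (g y) Hl (Hg y Hy)).
    + apply IH. intros y Hy; apply Hh; lra.
Qed.

Lemma LSint_nonneg g a b : nonneg g -> a <= b -> ele (Fin 0) (LSint F g a b).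
Proof. intros; apply esup_ub, lower_sum_zero; auto. Qed.

Lemma LSint_concat g a b c : nonneg g -> a <= b -> b <= c ->
  ele (eplus (LSint F g a b) (LSint F g b c)) (LSint F g a c).
Proof.
  intros Hg Hab Hbc. unfold LSint.
  destruct (esup (lower_sum F g a c)) as [z|] eqn:Ez; [|apply ele_PInf].
  assert (E1 : ele (esup (lower_sum F g a b)) (Fin z)).
  { apply esup_le; [exists 0; now apply lower_sum_zero|].
    intros s1 H1. replace s1 with (s1 + 0) by ring.
    apply (esup_fin_ub _ _ _ Ez).
    exact (lower_sum_concat _ _ _ _ _ _ H1 (lower_sum_zero g b c Hg Hbc)). }
  destruct (esup (lower_sum F g a b)) as [x|] eqn:Ex; [|contradiction].
  assert (E2 : ele (esup (lower_sum F g b c)) (Fin (z - x))).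
  { apply esup_le; [exists 0; now apply lower_sum_zero|].
    intros s2 H2. enough (x <= z - s2) by lra.
    apply (esup_fin_le _ _ _ Ex). intros s1 H1.
    pose proof (esup_fin_ub _ _ _ Ez (lower_sum_concat _ _ _ _ _ _ H1 H2)); lra. }
  destruct (esup (lower_sum F g b c)); simpl in *; [lra | contradiction].
Qed.

Lemma LSint_split g a b c : nonneg g -> a <= b -> b <= c ->
  ele (LSint F g a c) (eplus (LSint F g a b) (LSint F g b c)).
Proof.
  intros Hg Hab Hbc. unfold LSint.
  destruct (esup (lower_sum F g a b)) as [x|] eqn:Ex; [|apply ele_PInf].
  destruct (esup (lower_sum F g b c)) as [y|] eqn:Ey; [|apply ele_PInf].
  apply esup_le; [exists 0; apply lower_sum_zero; auto; lra|].
  intros s Hs. destruct (lower_sum_split _ _ _ _ Hs b ltac:(lra)) as [s1 [s2 [H1 [H2 ->]]]].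
  pose proof (esup_fin_ub _ _ _ Ex H1); pose proof (esup_fin_ub _ _ _ Ey H2); lra.
Qed.

Lemma LSint_scale g h a b lam : 0 < lam -> nonneg g -> a <= b ->
  (forall y, a < y <= b -> ele (escale lam (g y)) (h y)) ->
  ele (escale lam (LSint F g a b)) (LSint F h a b).
Proof.
  intros Hl Hg Hab Hh. unfold LSint at 2.
  destruct (esup (lower_sum F h a b)) as [z|] eqn:Ez; [|apply ele_PInf].
  assert (Hb : ele (LSint F g a b) (Fin (z / lam))).
  { apply esup_le; [exists 0; now apply lower_sum_zero|].
    intros s Hs.
    pose proof (esup_fin_ub _ _ _ Ez (lower_sum_scale _ _ _ _ _ _ (Rlt_le _ _ Hl) Hh Hs)).
    apply (Rmult_le_reg_l lam); auto. replace (lam * (z / lam)) with z by (field; lra). lra. }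
  apply ele_trans with (escale lam (Fin (z / lam))); [now apply escale_mono; [lra|]|].
  simpl. right; field; lra.
Qed.

End LowerSums.

Definition dirac (c x : R) : R := if Rlt_dec x c then 0 else 1.

Lemma dirac_lt c x : x < c -> dirac c x = 0.
Proof. unfold dirac; destruct (Rlt_dec x c); lra. Qed.

Lemma dirac_ge c x : c <= x -> dirac c x = 1.
Proof. unfold dirac; destruct (Rlt_dec x c); lra. Qed.

Lemma dirac_cdf c : 0 <= c <= 1 -> is_cdf01 (dirac c).
Proof.
  intros Hc. repeat split.
  - intros x y Hxy. unfold dirac; destruct (Rlt_dec x c), (Rlt_dec y c); lra.
  - intros x Hx; apply dirac_lt; lra.
  - intros x Hx; apply dirac_ge; lra.
  - intros x eps He. destruct (Rlt_dec x c) as [Hx|Hx].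
    + exists (c - x); split; [lra|]. intros y Hy. rewrite !dirac_lt by lra; lra.
    + exists 1; split; [lra|]. intros y Hy. rewrite !dirac_ge by lra; lra.
Qed.

Lemma lower_sum_dirac_outside c g a b s :
  lower_sum (dirac c) g a b s -> c <= a \/ b < c -> s <= 0.
Proof.
  induction 1 as [a | a x b k s Hax Hk Hg Hr IH]; intros Hc; [lra|].
  pose proof (lower_sum_le _ _ _ _ _ Hr) as Hxb.
  assert (s <= 0) by (apply IH; lra).
  destruct Hc; [rewrite !dirac_ge by lra | rewrite !dirac_lt by lra]; nra.
Qed.

Lemma lower_sum_dirac_upper c g a b s G :
  lower_sum (dirac c) g a b s -> g c = Fin G -> 0 <= G -> s <= G.
Proof.
  induction 1 as [a | a x b k s Hax Hk Hg Hr IH]; intros Hgc HG; [lra|].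
  pose proof (lower_sum_le _ _ _ _ _ Hr) as Hxb.
  destruct (Rle_lt_dec c a) as [Ha|Ha]; [|destruct (Rle_lt_dec c x) as [Hx|Hx]].
  - rewrite !dirac_ge by lra. assert (s <= G) by auto. nra.
  - rewrite dirac_ge, dirac_lt by lra.
    assert (k <= G) by (specialize (Hg c ltac:(lra)); now rewrite Hgc in Hg).
    assert (s <= 0) by (apply (lower_sum_dirac_outside c g x b s); auto; lra). nra.
  - rewrite !dirac_lt by lra. assert (s <= G) by auto. nra.
Qed.

Lemma LSint_dirac_outside c g a b : nonneg g -> a <= b -> c <= a \/ b < c ->
  ele (LSint (dirac c) g a b) (Fin 0).
Proof.
  intros Hg Hab Hc. apply esup_le; [exists 0; now apply lower_sum_zero|].
  intros s Hs. now apply (lower_sum_dirac_outside c g a b s).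
Qed.

Lemma LSint_dirac_upper c g a b G : nonneg g -> a <= b -> g c = Fin G -> 0 <= G ->
  ele (LSint (dirac c) g a b) (Fin G).
Proof.
  intros Hg Hab Hgc HG. apply esup_le; [exists 0; now apply lower_sum_zero|].
  intros s Hs. now apply (lower_sum_dirac_upper c g a b s G).
Qed.

Lemma LSint_dirac_lower c g a x y b G : nonneg g -> a <= x -> x < c <= y -> y <= b -> 0 <= G ->
  (forall z, x < z <= y -> ele (Fin G) (g z)) -> ele (Fin G) (LSint (dirac c) g a b).
Proof.
  intros Hg Hax Hxy Hyb HG HgG. apply esup_ub.
  replace G with (0 + (G * (dirac c y - dirac c x) + 0) + 0)
    by (rewrite dirac_ge, dirac_lt by lra; ring).
  apply lower_sum_concat with y; [apply lower_sum_concat with x|];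
    [apply lower_sum_zero; auto | | apply lower_sum_zero; auto].
  constructor; [lra | lra | exact HgG | constructor].
Qed.

Section DiracCosts.

Variables (lab : nat -> label) (v1 v2 c : R) (L : list nat).
Hypotheses (Hv1 : 0 < v1) (Hv2 : 0 < v2) (Hc0 : 0 < c) (Hc1 : c < 1).

Let W1 := wcount lab v1 v2 theta1 L.
Let W2 := wcount lab v1 v2 theta2 L.

Lemma dirac_cost_zero : ele (cost (dirac c) lab v1 v2 L (fun _ => 0)) (Fin (W1 / c)).
Proof.
  rewrite cost_const. replace (W1 / c) with (v1 * / c * INR (cnt lab theta1 L) +
    v2 * 0 * INR (cnt lab theta2 L)) by (unfold W1, wcount; simpl; field; lra).
  apply (eplus_mono _ (Fin _) _ (Fin _)); apply nmul_escale_ub; try lra; simpl.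
  - apply LSint_dirac_upper; auto using inv_eta_nonneg; try lra.
    + now apply inv_eta_pos.
    + apply Rlt_le, Rinv_0_lt_compat; lra.
  - apply LSint_dirac_outside; auto using inv_one_minus_eta_nonneg; lra.
Qed.

Lemma dirac_cost_one : ele (cost (dirac c) lab v1 v2 L (fun _ => 1)) (Fin (W2 / (1 - c))).
Proof.
  rewrite cost_const. replace (W2 / (1 - c)) with (v1 * 0 * INR (cnt lab theta1 L) +
    v2 * / (1 - c) * INR (cnt lab theta2 L)) by (unfold W2, wcount; simpl; field; lra).
  apply (eplus_mono _ (Fin _) _ (Fin _)); apply nmul_escale_ub; try lra; simpl.
  - apply LSint_dirac_outside; auto using inv_eta_nonneg; lra.
  - apply LSint_dirac_upper; auto using inv_one_minus_eta_nonneg; try lra.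
    + now apply inv_one_minus_eta_lt.
    + apply Rlt_le, Rinv_0_lt_compat; lra.
Qed.

Lemma dirac_cost_const_lower r c0 : 0 <= r < c -> 0 <= c0 <= 1 -> W1 * (1 - r) <= W2 * r ->
  ele (Fin (W1 / c)) (cost (dirac c) lab v1 v2 L (fun _ => c0)).
Proof.
  intros Hr Hc0' Hbal. rewrite cost_const.
  assert (HW1 : 0 <= W1) by (apply wcount_nonneg; auto).
  assert (HW2 : 0 <= W2) by (apply wcount_nonneg; auto).
  destruct (Rlt_le_dec c0 c) as [Hlt|Hge].
  - replace (W1 / c) with (v1 * / c * INR (cnt lab theta1 L) +
      v2 * 0 * INR (cnt lab theta2 L)) by (unfold W1, wcount; simpl; field; lra).
    apply (eplus_mono (Fin _) _ (Fin _)); apply nmul_escale_lb; try lra; simpl.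
    + apply (LSint_dirac_lower c inv_eta c0 c0 c 1); auto using inv_eta_nonneg; try lra.
      * apply Rlt_le, Rinv_0_lt_compat; lra.
      * intros z Hz. rewrite inv_eta_pos by lra. simpl. apply Rinv_le_contravar; lra.
    + apply LSint_nonneg; auto using inv_one_minus_eta_nonneg; lra.
  - apply ele_trans with (Fin (W2 / (1 - r))).
    + simpl. apply (Rmult_le_reg_r (c * (1 - r))); [nra|].
      replace (W1 / c * (c * (1 - r))) with (W1 * (1 - r)) by (field; lra).
      replace (W2 / (1 - r) * (c * (1 - r))) with (W2 * c) by (field; lra). nra.
    + replace (W2 / (1 - r)) with (v1 * 0 * INR (cnt lab theta1 L) +
        v2 * / (1 - r) * INR (cnt lab theta2 L)) by (unfold W2, wcount; simpl; field; lra).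
      apply (eplus_mono (Fin _) _ (Fin _)); apply nmul_escale_lb; try lra; simpl.
      * apply LSint_nonneg; auto using inv_eta_nonneg; lra.
      * apply (LSint_dirac_lower c inv_one_minus_eta 0 r c c0);
          auto using inv_one_minus_eta_nonneg; try lra.
        -- apply Rlt_le, Rinv_0_lt_compat; lra.
        -- intros z Hz. rewrite inv_one_minus_eta_lt by lra. simpl.
           apply Rinv_le_contravar; lra.
Qed.

End DiracCosts.

Definition step_at (k t : nat) : R := if (t <? k)%nat then 0 else 1.

Lemma step_at_feasible i j k : feasible i j (step_at k).
Proof.
  unfold step_at; split; intros t Ht.
  - destruct (Nat.ltb_spec t k); lra.
  - destruct (Nat.ltb_spec t k), (Nat.ltb_spec (S t) k); lra || lia.
Qed.

(* Step 1, the only use of optimality: testing the constant optimum against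
   the point mass at c and the step solution at k shows that every suffix
   (k,j) has ratio at most c, for each c in (r_ij, 1). *)
Lemma optimal_constant_suffix_bound lab v1 v2 i j k p c :
  0 < v1 -> 0 < v2 -> (i <= k <= j)%nat ->
  optimal lab v1 v2 i j p -> is_constant i j p ->
  r_ij lab v1 v2 i j < c < 1 -> r_ij lab v1 v2 k j <= c.
Proof.
  intros Hv1 Hv2 Hk [Hfeas Hopt] Hconst Hc.
  pose proof (r_ij_bounds lab v1 v2 i j Hv1 Hv2 ltac:(lia)) as Hr.
  pose proof (wcount_total_pos lab v1 v2 i j Hv1 Hv2 ltac:(lia)) as HW.
  assert (Hlow : ele (Fin (wcount lab v1 v2 theta1 (idx i j) / c))
                     (J (dirac c) lab v1 v2 i j p)).
  { rewrite J_cost, (cost_ext _ _ _ _ _ p (fun _ => p i)).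
    - apply (dirac_cost_const_lower lab v1 v2 c (idx i j) Hv1 Hv2 ltac:(lra) ltac:(lra)
               (r_ij lab v1 v2 i j)); [lra | apply Hfeas; lia |].
      rewrite r_ij_wcount in *. right; field; lra.
    - intros t Ht. apply Hconst, in_idx, Ht. }
  assert (Hup : ele (J (dirac c) lab v1 v2 i j (step_at k))
     (Fin (wcount lab v1 v2 theta1 (seq i (k - i)) / c +
           wcount lab v1 v2 theta2 (idx k j) / (1 - c)))).
  { rewrite J_cost, (idx_split i j k), cost_app by lia.
    apply (eplus_mono _ (Fin _) _ (Fin _)).
    - rewrite (cost_ext _ _ _ _ _ _ (fun _ => 0)); [apply dirac_cost_zero; auto; lra|].
      intros t Ht%in_seq_prefix. unfold step_at. destruct (Nat.ltb_spec t k); lra || lia.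
    - rewrite (cost_ext _ _ _ _ _ _ (fun _ => 1)); [apply dirac_cost_one; auto; lra|].
      intros t Ht%in_idx. unfold step_at. destruct (Nat.ltb_spec t k); lra || lia. }
  pose proof (Hopt _ (dirac_cdf c ltac:(lra)) _ (step_at_feasible i j k)) as Htest.
  pose proof (ele_trans _ _ _ (ele_trans _ _ _ Hlow Htest) Hup) as Hall; simpl in Hall.
  rewrite (idx_split i j k), wcount_app in Hall by lia.
  apply r_ij_le_iff; auto; [lia|].
  set (A := wcount lab v1 v2 theta1 (seq i (k - i))) in *.
  set (B := wcount lab v1 v2 theta1 (idx k j)) in *.
  set (D := wcount lab v1 v2 theta2 (idx k j)) in *.
  apply (Rmult_le_compat_r (c * (1 - c))) in Hall; [|nra].
  replace ((A + B) / c * (c * (1 - c))) with ((A + B) * (1 - c)) in Hall by (field; lra).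
  replace ((A / c + D / (1 - c)) * (c * (1 - c))) with (A * (1 - c) + D * c) in Hall
    by (field; lra).
  lra.
Qed.

(* Hence, letting c decrease to r_ij, every suffix ratio is bounded by r_ij. *)
Lemma optimal_constant_suffix_ratio lab v1 v2 i j k :
  0 < v1 -> 0 < v2 -> (i <= k <= j)%nat ->
  (exists p, optimal lab v1 v2 i j p /\ is_constant i j p) ->
  r_ij lab v1 v2 k j <= r_ij lab v1 v2 i j.
Proof.
  intros Hv1 Hv2 Hk [p [Hopt Hconst]].
  pose proof (r_ij_bounds lab v1 v2 k j Hv1 Hv2 ltac:(lia)) as Hrk.
  destruct (Rle_lt_dec (r_ij lab v1 v2 k j) (r_ij lab v1 v2 i j)) as [|Hlt]; auto.
  assert (r_ij lab v1 v2 k j <= (r_ij lab v1 v2 i j + r_ij lab v1 v2 k j) / 2); [|lra].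
  apply (optimal_constant_suffix_bound lab v1 v2 i j k p); auto; lra.
Qed.

Lemma inv_eta_scaled_le w1 w2 y : 0 <= w1 -> 0 < w2 -> 0 < y -> w1 <= y * (w1 + w2) ->
  ele (escale (w1 / w2) (inv_eta y)) (inv_one_minus_eta y).
Proof.
  intros Hw1 Hw2 Hy Hratio. rewrite inv_eta_pos by lra.
  unfold inv_one_minus_eta; destruct (Rlt_dec y 1) as [Hy1|]; simpl; auto.
  enough (0 <= / (1 - y) - w1 / w2 * / y) by lra.
  replace (/ (1 - y) - w1 / w2 * / y) with ((y * (w1 + w2) - w1) * / (w2 * y * (1 - y)))
    by (field; lra).
  apply Rle_mult_inv_pos; [lra|]. apply Rmult_lt_0_compat; [nra | lra].
Qed.

(* Step 2: raising a constant block from b' to b >= b' >= alpha does not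
   increase its cost when the block's ratio is at most alpha, since the
   theta1-labels save W1 * int_(b',b] rho/eta, which is at least the extra
   W2 * int_(b',b] rho/(1-eta) paid by the theta2-labels. *)
Lemma cost_const_raise F lab v1 v2 L alpha b' b :
  0 < v1 -> 0 < v2 -> 0 <= b' -> alpha <= b' -> b' <= b -> b <= 1 ->
  wcount lab v1 v2 theta1 L <=
    alpha * (wcount lab v1 v2 theta1 L + wcount lab v1 v2 theta2 L) ->
  ele (cost F lab v1 v2 L (fun _ => b')) (cost F lab v1 v2 L (fun _ => b)).
Proof.
  intros Hv1 Hv2 Hb' Hab' Hbb Hb1 Hratio.
  destruct (Rle_lt_or_eq_dec b' b Hbb) as [Hlt|<-]; [|apply ele_refl].
  set (X1 := LSint F inv_eta b' b). set (X2 := LSint F inv_one_minus_eta b' b).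
  assert (HC1 : ele (C_rho F theta1 b') (eplus X1 (C_rho F theta1 b))).
  { apply LSint_split; auto using inv_eta_nonneg; lra. }
  assert (HC2 : ele (eplus X2 (C_rho F theta2 b')) (C_rho F theta2 b)).
  { cbn [C_rho]. rewrite eplus_comm.
    apply LSint_concat; auto using inv_one_minus_eta_nonneg; lra. }
  unfold wcount in Hratio; cbn [weight] in Hratio. rewrite !cost_const.
  destruct (cnt lab theta1 L) as [|m]; [|destruct (cnt lab theta2 L) as [|n]].
  - simpl nmul. rewrite !eplus_0_l. apply nmul_mono, escale_mono; [lra|].
    apply ele_trans with (2 := HC2), ele_eplus_nonneg_l.
    apply LSint_nonneg; auto using inv_one_minus_eta_nonneg; lra.
  - exfalso. pose proof (pos_INR m). rewrite S_INR in Hratio. simpl INR in Hratio.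
    assert (0 < v1 * (INR m + 1)) by nra. nra.
  - rewrite !nmul_escale by lia.
    pose proof (pos_INR m). pose proof (pos_INR n). rewrite !S_INR in *.
    set (W1 := v1 * (INR m + 1)) in *. set (W2 := v2 * (INR n + 1)) in *.
    assert (HW1 : 0 < W1) by (unfold W1; nra). assert (HW2 : 0 < W2) by (unfold W2; nra).
    apply (ele_transfer _ _ _ _ _ _ X1 X2); try lra; auto.
    replace W1 with (W2 * (W1 / W2)) at 1 by (field; lra).
    rewrite <- escale_escale. apply escale_mono; [lra|].
    apply LSint_scale; auto using inv_eta_nonneg; try lra.
    + apply Rdiv_lt_0_compat; lra.
    + intros y Hy. apply inv_eta_scaled_le; try lra. nra.
Qed.

Lemma J_raise_suffix F lab v1 v2 i j k alpha b' b (u u' : nat -> R) :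
  0 < v1 -> 0 < v2 -> (i <= k <= j)%nat -> 0 <= b' -> alpha <= b' -> b' <= b -> b <= 1 ->
  r_ij lab v1 v2 k j <= alpha ->
  (forall t, (i <= t < k)%nat -> u t = u' t) ->
  (forall t, (k <= t <= j)%nat -> u t = b' /\ u' t = b) ->
  ele (J F lab v1 v2 i j u) (J F lab v1 v2 i j u').
Proof.
  intros Hv1 Hv2 Hk Hb' Hab' Hbb Hb1 Hr Hhead Htail.
  rewrite !J_cost, (idx_split i j k), !cost_app by lia. apply eplus_mono.
  - rewrite (cost_ext _ _ _ _ _ u u'); [apply ele_refl|].
    intros t Ht%in_seq_prefix. now apply Hhead.
  - rewrite (cost_ext _ _ _ _ _ u (fun _ => b')), (cost_ext _ _ _ _ _ u' (fun _ => b)).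
    + apply (cost_const_raise F lab v1 v2 (idx k j) alpha); auto.
      now apply r_ij_le_iff; [| |lia|].
    + intros t Ht%in_idx. now apply Htail.
    + intros t Ht%in_idx. now apply Htail.
Qed.

Lemma feasible_mono i j q s t : feasible i j q -> (i <= s <= t)%nat -> (t <= j)%nat ->
  q s <= q t.
Proof.
  intros [_ Hstep] Hst Htj. induction t as [|t IH].
  - replace s with 0%nat by lia. lra.
  - destruct (Nat.eq_dec s (S t)) as [->|Hne]; [lra|].
    apply Rle_trans with (q t); [apply IH; lia | apply Hstep; lia].
Qed.

(* Step 3: starting from the constant alpha, raise the tail step by step;
   after d steps the solution is t |-> min (q t) (q (i+d)), which agrees with q
   up to i+d and is constant afterwards. *)
Lemma J_raise_profile F lab v1 v2 i j alpha q :
  0 < v1 -> 0 < v2 -> 0 <= alpha -> feasible i j q -> alpha <= q i ->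
  (forall k, (i <= k <= j)%nat -> r_ij lab v1 v2 k j <= alpha) ->
  forall d, (i + d <= j)%nat ->
  ele (J F lab v1 v2 i j (fun _ => alpha))
      (J F lab v1 v2 i j (fun t => Rmin (q t) (q (i + d)%nat))).
Proof.
  intros Hv1 Hv2 Ha Hq Hqi Hsuf d. pose proof (feasible_mono i j q) as Hm.
  assert (Hq1 : forall t, (i <= t <= j)%nat -> q t <= 1) by (intros t Ht; apply Hq, Ht).
  induction d as [|d IH]; intros Hd.
  - rewrite Nat.add_0_r.
    apply (J_raise_suffix F lab v1 v2 i j i alpha alpha (q i)); auto; try lra; try lia.
    + apply Hq1; lia.
    + apply Hsuf; lia.
    + intros t Ht. split; auto. apply Rmin_right, Hm; auto; lia.
  - apply ele_trans with (1 := IH ltac:(lia)).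
    assert (Hqd : q i <= q (i + d)%nat) by (apply Hm; auto; lia).
    apply (J_raise_suffix F lab v1 v2 i j (i + S d) alpha (q (i + d)%nat) (q (i + S d)%nat));
      auto; try lra; try lia.
    + apply Hm; auto; lia.
    + apply Hq1; lia.
    + apply Hsuf; lia.
    + intros t Ht. rewrite !Rmin_left; auto; apply Hm; auto; lia.
    + intros t Ht. rewrite !Rmin_right; auto; apply Hm; auto; lia.
Qed.

Theorem lemma4p9 (T : nat) (lab : nat -> label) (v1 v2 : R) (i j : nat) (alpha : R) :
  0 < v1 -> 0 < v2 ->
  (1 <= i)%nat -> (i <= j)%nat -> (j <= T)%nat ->
  (exists p, optimal lab v1 v2 i j p /\ is_constant i j p) ->
  r_ij lab v1 v2 i j <= alpha -> alpha <= 1 ->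
  forall F, is_cdf01 F ->
  forall q, feasible i j q -> alpha <= q i ->
    ele (J F lab v1 v2 i j (fun _ => alpha)) (J F lab v1 v2 i j q).
Proof.
  intros Hv1 Hv2 _ Hij _ Hopt Hr _ F _ q Hq Hqi.
  assert (Hsuf : forall k, (i <= k <= j)%nat -> r_ij lab v1 v2 k j <= alpha).
  { intros k Hk. eapply Rle_trans; [apply optimal_constant_suffix_ratio|]; eauto. }
  assert (Ha : 0 <= alpha) by (pose proof (r_ij_bounds lab v1 v2 i j Hv1 Hv2 Hij); lra).
  pose proof (J_raise_profile F lab v1 v2 i j alpha q Hv1 Hv2 Ha Hq Hqi Hsuf (j - i)
                ltac:(lia)) as Hraise.
  replace (i + (j - i))%nat with j in Hraise by lia.
  apply ele_trans with (1 := Hraise). rewrite !J_cost.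
  rewrite (cost_ext _ _ _ _ _ _ q); [apply ele_refl|].
  intros t Ht%in_idx. apply Rmin_left, (feasible_mono i j); auto; lia.
Qed.
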